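(* Let $\mathfrak g$ be a profinite-dimensional $\mathbb K$-Lie algebra, let $\mathbf V(\mathfrak g)$ be a weakly complete unital algebra and $\nu\colon\mathfrak g\to[\mathbf V(\mathfrak g)]$ a continuous Lie algebra morphism (depending functorially on $\mathfrak g$) such that for every finite-dimensional unital associative $\mathbb K$-algebra $F$ and every continuous Lie algebra morphism $f\colon\mathfrak g\to[F]$ there exists a unique continuous unital algebra morphism $f'\colon\mathbf V(\mathfrak g)\to F$ with $f=f'\circ\nu$. Then $(\mathbf V(\mathfrak g),\nu)$ satisfies the universal property with respect to all weakly complete unital algebras $A$ (every continuous Lie algebra morphism $f\colon\mathfrak g\to[A]$ factors as $f=f'\circ\nu$ for a unique continuous unital algebra morphism $f'\colon\mathbf V(\mathfrak g)\to A$); consequently $\mathbf V(\mathfrak g)\cong\mathbf U(\mathfrak g)$ naturally, via an isomorphism carrying $\nu$ to $\lambda_{\mathfrak g}$.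
   Context: $\mathbb K\in\{\mathbb R,\mathbb C\}$. A topological $\mathbb K$-vector space is weakly complete if it is isomorphic to a power $\mathbb K^J$ (with the product topology) for some set $J$. A weakly complete unital algebra is a unital associative $\mathbb K$-algebra $A$ carrying a topology that makes it a weakly complete vector space and makes multiplication continuous; morphisms are continuous unital algebra homomorphisms. For such $A$, $[A]$ denotes the topological Lie algebra with the same underlying topological vector space and bracket $[x,y]=xy-yx$. For a topological $\mathbb K$-Lie algebra $\mathfrak g$ let $\mathcal I(\mathfrak g)$ be the set of closed ideals $I$ of $\mathfrak g$ with $\dim \mathfrak g/I<\infty$; $\mathfrak g$ is profinite-dimensional if the natural map $\mathfrak g\to\lim_{I\in\mathcal I(\mathfrak g)}\mathfrak g/I$ is an isomorphism of topological Lie algebras. The weakly complete enveloping algebra of a profinite-dimensional Lie algebra $\mathfrak g$ is a weakly complete unital algebra $\mathbf U(\mathfrak g)$ together with a continuous Lie algebra morphism $\lambda_{\mathfrak g}\colon\mathfrak g\to[\mathbf U(\mathfrak g)]$ such that for every weakly complete unital algebra $A$ and every continuous Lie algebra morphism $f\colon\mathfrak g\to[A]$ there is a unique continuous unital algebra morphism $f'\colon\mathbf U(\mathfrak g)\to A$ with $f=f'\circ\lambda_{\mathfrak g}$ (it exists and is unique up to unique isomorphism). *)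

From HB Require Import structures.
From mathcomp Require Import all_boot all_order all_algebra.
From mathcomp Require Import all_classical all_reals all_analysis.
From mathcomp Require Export complex.
Export numFieldNormedType.Exports.

Set Implicit Arguments.
Unset Strict Implicit.
Unset Printing Implicit Defensive.

Import Order.TTheory GRing.Theory Num.Theory.
Local Open Scope classical_set_scope.
Local Open Scope ring_scope.

(* A unital associative K-algebra carrying a topology (no axioms linking   *)
(* the two yet; these are imposed by [wc_alg] below).                      *)
#[short(type="topAlgType")]
HB.structure Definition TopAlgebra (K : numDomainType) :=
  {A of Topological A & GRing.Algebra K A}.

Section Defs.
Context {K : numFieldType}.

(* [A] is isomorphic, as a topological K-vector space, to the power K^J   *)
(* with the product topology ({ptws J -> K} is the product topology).     *)
Definition wc_space_over (J : Type) (A : topAlgType K) : Prop :=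
  exists (phi : A -> {ptws J -> K}) (psi : {ptws J -> K} -> A),
    [/\ (forall (a : K) (x y : A) (j : J), phi (a *: x + y) j = a * phi x j + phi y j),
        cancel phi psi, cancel psi phi, continuous phi & continuous psi].

Definition weakly_complete (A : topAlgType K) : Prop :=
  exists J : Type, wc_space_over J A.

Definition wc_alg (A : topAlgType K) : Prop :=
  weakly_complete A /\ continuous (fun p : A * A => p.1 * p.2).

(* finite-dimensional unital associative algebra with its (unique Hausdorff *)
(* vector space) topology, i.e. isomorphic to K^n as a topological vector   *)
(* space; multiplication is then automatically continuous.                  *)
Definition fd_alg (A : topAlgType K) : Prop :=
  (exists n : nat, wc_space_over 'I_n A) /\
  continuous (fun p : A * A => p.1 * p.2).

Definition cont_alg_morph (A B : topAlgType K) (f : A -> B) : Prop :=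
  [/\ (forall (a : K) (x y : A), f (a *: x + y) = a *: f x + f y),
      (forall x y : A, f (x * y) = f x * f y),
      f 1 = 1 & continuous f].

Definition is_top_lie (g : topologicalLmodType K) (br : g -> g -> g) : Prop :=
  [/\ (forall (a : K) (x y z : g), br (a *: x + y) z = a *: br x z + br y z),
      (forall (a : K) (x y z : g), br x (a *: y + z) = a *: br x y + br x z),
      (forall x : g, br x x = 0),
      (forall x y z : g, br x (br y z) + br y (br z x) + br z (br x y) = 0) &
      continuous (fun p : g * g => br p.1 p.2)].

Definition cont_lie_morph (g : topologicalLmodType K) (br : g -> g -> g)
    (A : topAlgType K) (f : g -> A) : Prop :=
  [/\ (forall (a : K) (x y : g), f (a *: x + y) = a *: f x + f y),
      (forall x y : g, f (br x y) = f x * f y - f y * f x) &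
      continuous f].

(* I in I(g): closed ideal with dim g/I < oo (g/I spanned by finitely many *)
(* cosets)                                                                 *)
Definition cofinite_closed_ideal (g : topologicalLmodType K)
    (br : g -> g -> g) (I : set g) : Prop :=
  [/\ I 0,
      (forall (a : K) (x y : g), I x -> I y -> I (a *: x + y)),
      (forall x y : g, I y -> I (br x y)),
      closed I &
      exists (n : nat) (v : 'I_n -> g),
        forall x : g, exists c : 'I_n -> K, I (x - \sum_(i < n) c i *: v i)].

Definition ideals_fc (g : topologicalLmodType K) (br : g -> g -> g) :=
  {I : set g | cofinite_closed_ideal br I}.

Definition coset (g : topologicalLmodType K) (I : set g) (x : g) : set g :=
  [set y | I (y - x)].

(* the projective limit lim_{I in I(g)} g/I, as the set of compatible      *)
(* families of cosets (c_I)_I, inside the product of the g/I               *)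
Definition lim_quot (g : topologicalLmodType K) (br : g -> g -> g) :
    set (ideals_fc br -> set g) :=
  [set c | (forall I : ideals_fc br, exists x : g, c I = coset (sval I) x) /\
           (forall I I' : ideals_fc br, sval I `<=` sval I' -> c I `<=` c I')].

Definition lim_nat (g : topologicalLmodType K) (br : g -> g -> g) (x : g) :
    ideals_fc br -> set g :=
  fun I => coset (sval I) x.

(* open subsets of g/I for the quotient topology: sets of cosets whose     *)
(* union is open in g                                                      *)
Definition quot_open (g : topologicalLmodType K) (I : set g)
    (V : set (set g)) : Prop :=
  (forall S, V S -> exists x : g, S = coset I x) /\
  open (\bigcup_(S in V) S).

(* subbase of the product topology on the family of the g/I: cylinders *)
Definition lim_cylinders (g : topologicalLmodType K) (br : g -> g -> g) :
    set (set (ideals_fc br -> set g)) :=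
  [set C | exists (I : ideals_fc br) (V : set (set g)),
             quot_open (sval I) V /\ C = [set c | V (c I)]].

Definition gen_open (X : Type) (B : set (set X)) (W : set X) : Prop :=
  forall x, W x -> exists s : seq (set X),
    [/\ (forall C, C \in s -> B C),
        (forall C, C \in s -> C x) &
        (forall y, (forall C, C \in s -> C y) -> W y)].

(* g is profinite-dimensional: the natural map g -> lim g/I is a bijection *)
(* onto the limit which is a homeomorphism for the limit (= subspace of    *)
(* product) topology.  (It is automatically a Lie algebra morphism for the *)
(* componentwise Lie structure of the limit, so this is exactly: is an       *)
(* isomorphism of topological Lie algebras.)                                *)
Definition profinite_dim (g : topologicalLmodType K) (br : g -> g -> g) : Prop :=
  [/\ injective (@lim_nat g br),
      range (@lim_nat g br) = @lim_quot g br,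
      (forall W, gen_open (@lim_cylinders g br) W -> open (@lim_nat g br @^-1` W)) &
      (forall U : set g, open U -> exists W,
          gen_open (@lim_cylinders g br) W /\ @lim_nat g br @` U = W `&` @lim_quot g br)].

Definition is_wc_envelope (g : topologicalLmodType K) (br : g -> g -> g)
    (U : topAlgType K) (lam : g -> U) : Prop :=
  [/\ wc_alg U, cont_lie_morph br lam &
      forall (A : topAlgType K), wc_alg A ->
      forall f : g -> A, cont_lie_morph br f ->
        exists! f' : U -> A, cont_alg_morph f' /\ f = f' \o lam].

End Defs.

Arguments lim_quot {K g} br _.
Arguments lim_nat {K g} br x _.
Arguments lim_cylinders {K g} br _.
Arguments is_wc_envelope {K g} br U lam.

From HB Require Import structures.
From mathcomp Require Import all_boot all_order all_algebra.
From mathcomp Require Import all_classical all_reals all_analysis.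
From mathcomp Require Import complex ring.
From Stdlib Require List.
Import numFieldNormedType.Exports.
Set Implicit Arguments.
Unset Strict Implicit.
Unset Printing Implicit Defensive.
Import Order.TTheory GRing.Theory Num.Theory.
Local Open Scope classical_set_scope.
Local Open Scope ring_scope.

(* Proposition 1.9: if (V, nu) is universal for continuous Lie morphisms of *)
(* g into finite-dimensional algebras, it is universal for all weakly       *)
(* complete algebras, hence isomorphic to the weakly complete enveloping    *)
(* algebra.        *)
(* Let A be weakly complete, with coordinates phi : A ~ K^J.  By continuity  *)
(* of the product, the j-th coordinate of x * z * y depends only on finitely *)
(* many coordinates of z; hence for a finite list S of coordinates the ideal *)
(* I_S of elements whose generated ideal has zero S-coordinates has finite   *)
(* codimension, and A/I_S is presented by matrices.  Embedding A/I_S into a  *)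
(* matrix algebra by its right regular representation, whose image is the   *)
(* commutant of the left multiplications, the finite-dimensional universal  *)
(* property yields a lift of f modulo I_S, unique modulo I_S.  Lifts for     *)
(* S = [:: j] are coherent, and their j-th coordinates glue to a continuous *)
(* algebra morphism V -> A.  The isomorphism with U(g) is then the usual     *)
(* uniqueness of universal objects.                                          *)

Definition lin_map (K : numDomainType) (U W : lmodType K) (f : U -> W) : Prop :=
  forall (a : K) (x y : U), f (a *: x + y) = a *: f x + f y.

Section LinearMaps.
Variables (K : numDomainType) (U W : lmodType K) (f : U -> W).
Hypothesis fl : lin_map f.

Lemma lin_map0 : f 0 = 0.
Proof.
have := fl 1 0 0; rewrite !scale1r addr0.
by move/(congr1 (fun t => t - f 0)); rewrite addrK subrr => ->.
Qed.

Lemma lin_mapZ a x : f (a *: x) = a *: f x.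
Proof. by rewrite -[a *: x]addr0 fl lin_map0 addr0. Qed.

Lemma lin_mapD x y : f (x + y) = f x + f y.
Proof. by have := fl 1 x y; rewrite !scale1r. Qed.

Lemma lin_mapB x y : f (x - y) = f x - f y.
Proof. by rewrite lin_mapD -[- y]scaleN1r lin_mapZ scaleN1r. Qed.

Lemma lin_map_sum (I : Type) (r : seq I) (F : I -> U) :
  f (\sum_(i <- r) F i) = \sum_(i <- r) f (F i).
Proof.
elim: r => [|i r IH]; first by rewrite !big_nil lin_map0.
by rewrite !big_cons lin_mapD IH.
Qed.
End LinearMaps.

Section Continuity.
Variable K : numFieldType.

Lemma continuous_compose (T U W : topologicalType) (f : T -> U) (g : U -> W) :
  continuous f -> continuous g -> continuous (g \o f).
Proof. by move=> fc gc x; apply: continuous_comp; [exact: fc|exact: gc]. Qed.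

Lemma continuous_pair (T U W : topologicalType) (f : T -> U) (h : T -> W) :
  continuous f -> continuous h -> continuous (fun x => (f x, h x)).
Proof. by move=> fc hc x; apply: cvg_pair; [exact: fc|exact: hc]. Qed.

Lemma continuous_fst (T U : topologicalType) : continuous (@fst T U).
Proof. by move=> [x y]; exact: cvg_fst. Qed.

Lemma continuous_snd (T U : topologicalType) : continuous (@snd T U).
Proof. by move=> [x y]; exact: cvg_snd. Qed.

Lemma continuous_sum (T : topologicalType) (I : Type) (r : seq I) (f : I -> T -> K) :
  (forall i, continuous (f i)) -> continuous (fun x => \sum_(i <- r) f i x).
Proof.
move=> fc; elim: r => [|i r IH] x.
  under eq_fun do rewrite big_nil; exact: cvg_cst.
under eq_fun do rewrite big_cons.
exact: (cvgD (fc i x) (IH x)).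
Qed.

Lemma continuous_mul (T : topologicalType) (f h : T -> K) :
  continuous f -> continuous h -> continuous (fun x => f x * h x).
Proof. by move=> fc hc x; exact: (cvgM (fc x) (hc x)). Qed.

Lemma ptws_eval_continuous (J : Type) (j : J) :
  continuous (fun h : {ptws J -> K} => h j).
Proof.
move=> h.
have Hsup := @cvg_sup (J -> K) J
  (fun i => Topological.class (initial_topology (fun f : J -> K => f i)))
  (nbhs (h : {ptws J -> K})) h (nbhs_filter h).
have Hj := Hsup.1 (@cvg_id _ (nbhs (h : {ptws J -> K}))) j.
exact: (cvg_trans (cvg_app (fun f : J -> K => f j) Hj)
  (@initial_continuous (J -> K) K (fun f => f j) h)).
Qed.

Lemma continuous_into_ptws (T : topologicalType) (J : Type) (h : T -> {ptws J -> K}) :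
  (forall j, continuous (fun x => h x j)) -> continuous h.
Proof.
move=> hc x.
apply: (@cvg_sup (J -> K) J
  (fun i => Topological.class (initial_topology (fun f : J -> K => f i)))
  (h @ nbhs x) (h x) (fmap_filter _ (nbhs_filter x))).2.
move=> i A /= [_ [[B Bop <-] Bfs sBfA]].
have : \forall y \near x, B (h y i) by apply: hc; exact: open_nbhs_nbhs.
by apply: filterS => y Hy; apply: sBfA.
Qed.

Definition box_nbhs (J : Type) : set_system {ptws J -> K} :=
  [set U | exists (L : seq (J * K)), (forall p, List.In p L -> 0 < p.2) /\
     forall h : J -> K, (forall p, List.In p L -> `|h p.1| < p.2) -> U h].

Lemma box_nbhs_filter J : Filter (@box_nbhs J).
Proof.
constructor.
- by exists [::]; split => // h _.
- move=> P Q [L1 [p1 H1]] [L2 [p2 H2]]; exists (L1 ++ L2); split.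
    by move=> p Hp; case: (List.in_app_or _ _ _ Hp); [exact: p1|exact: p2].
  by move=> h Hh; split; [apply: H1|apply: H2] => p Hp; apply: Hh;
    apply: List.in_or_app; [left|right].
- by move=> P Q PQ [L [p H]]; exists L; split => // h /H; exact: PQ.
Qed.

Lemma ptws_nbhs0_box (J : Type) (U : set {ptws J -> K}) :
  nbhs (0 : {ptws J -> K}) U -> box_nbhs U.
Proof.
suff : @box_nbhs J --> (0 : {ptws J -> K}) by move=> /(_ U).
apply: (@cvg_sup (J -> K) J
  (fun i => Topological.class (initial_topology (fun f : J -> K => f i)))
  (@box_nbhs J) (0 : {ptws J -> K}) (@box_nbhs_filter J)).2.
move=> i A /= [_ [[B Bop <-] Bfs sBfA]].
have /nbhs_ballP [e ep eB] : nbhs (0 : K) B by apply: open_nbhs_nbhs.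
exists [:: (i, e)]; split; first by move=> p [<-|].
move=> h Hh; apply: sBfA; apply: eB.
by rewrite /ball /= sub0r normrN; apply: (Hh (i, e)); left.
Qed.

Lemma mxentry_continuous (m n : nat) (i : 'I_m) (j : 'I_n) :
  continuous (fun M : 'M[K]_(m, n) => M i j).
Proof.
move=> M B /= BM.
exists (fun i' j' => if (i' == i) && (j' == j) then B else setT).
  by move=> i' j'; case: ifP => [/andP[/eqP-> /eqP->]//|_]; exact: filterT.
by move=> N /(_ i j); rewrite !eqxx.
Qed.

Lemma continuous_into_mx (T : topologicalType) (m n : nat) (h : T -> 'M[K]_(m, n)) :
  (forall i j, continuous (fun x => h x i j)) -> continuous h.
Proof.
move=> hc x A [P Pn PA].
have : \forall y \near x, forall i j, P i j (h y i j).
  apply: filter_forall => i; apply: filter_forall => j.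
  exact: (hc i j x _ (Pn i j)).
by apply: filterS => y Hy; apply: PA.
Qed.

Lemma lin_map_mx_scalar_continuous (m n : nat) (L : 'M[K]_(m, n) -> K^o) :
  lin_map L -> continuous L.
Proof.
move=> Ll.
have -> : L = fun M => \sum_(i < m) \sum_(j < n) M i j * L (delta_mx i j).
  apply: funext => M; rewrite {1}(matrix_sum_delta M) lin_map_sum //.
  apply: eq_bigr => i _; rewrite lin_map_sum //.
  by apply: eq_bigr => j _; rewrite lin_mapZ.
apply: continuous_sum => i; apply: continuous_sum => j.
by apply: continuous_mul; [exact: mxentry_continuous|exact: cst_continuous].
Qed.

Lemma lin_map_mx_continuous (m n p q : nat) (L : 'M[K]_(m, n) -> 'M[K]_(p, q)) :
  lin_map L -> continuous L.
Proof.
move=> Ll; apply: continuous_into_mx => k l.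
by apply: lin_map_mx_scalar_continuous => a M N; rewrite Ll !mxE.
Qed.
End Continuity.

(* Square matrices as a topological algebra; [MX N] has size N.+1 so that *)
(* it carries a (nontrivial) ring structure.                               *)
Section MatrixAlgebra.
Variable K : numFieldType.

Definition MX (N : nat) := 'M[K]_N.+1.
HB.instance Definition _ (N : nat) := Topological.on (MX N).
HB.instance Definition _ (N : nat) := GRing.Algebra.on (MX N).

Lemma MX_mulE N (M1 M2 : MX N) : M1 * M2 = (M1 : 'M[K]_N.+1) *m M2.
Proof. by []. Qed.

Lemma MX_mul_continuous N : continuous (fun p : MX N * MX N => p.1 * p.2).
Proof.
apply: continuous_into_mx => i j.
under eq_fun do rewrite MX_mulE mxE.
apply: continuous_sum => k; apply: continuous_mul.
  exact: (continuous_compose (@continuous_fst _ _) (@mxentry_continuous K _ _ i k)).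
exact: (continuous_compose (@continuous_snd _ _) (@mxentry_continuous K _ _ k j)).
Qed.

Lemma MX_fd N : fd_alg (MX N).
Proof.
split; last exact: MX_mul_continuous.
pose X := {: 'I_N.+1 * 'I_N.+1}.
exists #|X|.
pose phi (M : MX N) : {ptws 'I_#|X| -> K} :=
  fun k => M (enum_val k).1 (enum_val k).2.
pose psi (h : {ptws 'I_#|X| -> K}) : MX N := \matrix_(i, j) h (enum_rank (i, j)).
exists phi, psi; split.
- by move=> a x y j; rewrite /phi !mxE.
- by move=> M; apply/matrixP => i j; rewrite /psi /phi mxE enum_rankK.
- move=> h; apply: funext => k.
  by rewrite /psi /phi mxE -surjective_pairing enum_valK.
- by apply: continuous_into_ptws => k; exact: mxentry_continuous.
- apply: continuous_into_mx => i j.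
  have -> : (fun h => psi h i j) = (fun h : {ptws _ -> K} => h (enum_rank (i, j))).
    by apply: funext => h; rewrite /psi mxE.
  exact: ptws_eval_continuous.
Qed.

Definition mx_of_lin m n (f : 'rV[K]_m -> 'rV[K]_n) : 'M[K]_(m, n) :=
  \matrix_(i, j) f (delta_mx 0 i) 0 j.

Lemma mx_of_linE m n (f : 'rV[K]_m -> 'rV[K]_n) u :
  lin_map f -> u *m mx_of_lin f = f u.
Proof.
move=> fl; apply/rowP => j; rewrite !mxE.
rewrite [in RHS](row_sum_delta u) lin_map_sum // summxE.
by apply: eq_bigr => i _; rewrite lin_mapZ // !mxE.
Qed.

Lemma mx_ext m n (M1 M2 : 'M[K]_(m, n)) :
  (forall u : 'rV_m, u *m M1 = u *m M2) -> M1 = M2.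
Proof. by move=> H; apply/row_matrixP => i; rewrite !rowE H. Qed.
End MatrixAlgebra.

Section Morphisms.
Variable K : numFieldType.

Lemma comp_alg_morph (A B C : topAlgType K) (f : A -> B) (h : B -> C) :
  cont_alg_morph f -> cont_alg_morph h -> cont_alg_morph (h \o f).
Proof.
move=> [f1 f2 f3 f4] [h1 h2 h3 h4]; split => /=.
- by move=> a x y; rewrite f1 h1.
- by move=> x y; rewrite f2 h2.
- by rewrite f3 h3.
- exact: continuous_compose.
Qed.

Lemma id_alg_morph (A : topAlgType K) : cont_alg_morph (@id A).
Proof. by split => // x; exact: cvg_id. Qed.

Lemma comp_lie_alg_morph (g : topologicalLmodType K) (br : g -> g -> g)
    (A B : topAlgType K) (f : g -> A) (h : A -> B) :
  cont_lie_morph br f -> cont_alg_morph h -> cont_lie_morph br (h \o f).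
Proof.
move=> [f1 f2 f3] [h1 h2 h3 h4]; split => /=.
- by move=> a x y; rewrite f1 h1.
- by move=> x y; rewrite f2 (lin_mapB h1) !h2.
- exact: continuous_compose.
Qed.

Lemma conj_alg_morph (B : topAlgType K) N (h : B -> MX K N) (U Ui : 'M[K]_N.+1) :
  U *m Ui = 1%:M -> Ui *m U = 1%:M -> cont_alg_morph h ->
  cont_alg_morph (fun v => (U *m h v *m Ui : MX K N)).
Proof.
move=> UUi UiU [h1 h2 h3 h4]; split => /=.
- by move=> a x y; rewrite h1 mulmxDr mulmxDl -!scalemxAr -!scalemxAl.
- move=> x y; rewrite h2 !MX_mulE.
  by rewrite -!mulmxA (mulmxA Ui U) UiU mul1mx.
- by rewrite h3; change (U *m 1%:M *m Ui = 1%:M); rewrite mulmx1.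
- have conj_cont : continuous (fun M : 'M[K]_N.+1 => U *m M *m Ui).
    apply: lin_map_mx_continuous => a M1 M2.
    by rewrite mulmxDr mulmxDl -!scalemxAr -!scalemxAl.
  exact: (continuous_compose h4 conj_cont).
Qed.

Definition diag2 N (M : 'M[K]_N.+1) : 'M[K]_(N.+1 + N.+1) := block_mx M 0 0 M.

Lemma diag2_alg_morph (B : topAlgType K) N (h : B -> MX K N) :
  cont_alg_morph h -> cont_alg_morph (fun v => (diag2 (h v) : MX K (N + N.+1))).
Proof.
have D_lin : lin_map (@diag2 N).
  by move=> a M1 M2; rewrite /diag2 scale_block_mx add_block_mx !scaler0 !addr0.
have D_mul M1 M2 : diag2 (M1 *m M2) = diag2 M1 *m diag2 M2.
  by rewrite /diag2 mulmx_block !mulmx0 !mul0mx !addr0 add0r.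
move=> [h1 h2 h3 h4]; split => /=.
- by move=> a x y; rewrite h1 D_lin.
- by move=> x y; rewrite h2 D_mul.
- by rewrite h3 /diag2 -scalar_mx_block.
- exact: (continuous_compose h4 (lin_map_mx_continuous D_lin)).
Qed.
End Morphisms.

(* A quotient A/I of a topological algebra by a two-sided ideal I of finite *)
(* codimension is presented by a continuous linear surjection G : A -> K^m   *)
(* with kernel I and a linear section P.  Right and left multiplications on  *)
(* A/I are then given by matrices; the right regular representation is an    *)
(* algebra morphism into matrices, and its image is the commutant of the     *)
(* left multiplications.                                                     *)
Section RegularRepresentation.
Variables (K : numFieldType) (A : topAlgType K).
Hypothesis mulc : continuous (fun p : A * A => p.1 * p.2).
Variables (m : nat) (G : A -> 'rV[K]_m.+1) (P : 'rV[K]_m.+1 -> A).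
Hypothesis Gl : lin_map G.
Hypothesis Pl : lin_map P.
Hypothesis GP : forall u, G (P u) = u.
Hypothesis ker_ideal : forall a x, G a = 0 -> G (x * a) = 0 /\ G (a * x) = 0.
Hypothesis Gc : continuous G.

Lemma G_mul_congr a a' x :
  G a = G a' -> G (x * a) = G (x * a') /\ G (a * x) = G (a' * x).
Proof.
move=> e; have /(ker_ideal x) [h1 h2] : G (a - a') = 0.
  by rewrite (lin_mapB Gl) e subrr.
split; apply/eqP; rewrite -subr_eq0 -(lin_mapB Gl); apply/eqP.
  by rewrite -mulrBr.
by rewrite -mulrBl.
Qed.

Definition right_mult_mx (b : A) : MX K m := mx_of_lin (fun u => G (P u * b)).
Definition left_mult_mx (c : A) : MX K m := mx_of_lin (fun u => G (c * P u)).

Lemma right_mult_mxE a b : G a *m right_mult_mx b = G (a * b).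
Proof.
rewrite mx_of_linE; last by move=> c x y; rewrite Pl mulrDl -scalerAl Gl.
by case: (G_mul_congr b (GP (G a))).
Qed.

Lemma left_mult_mxE a c : G a *m left_mult_mx c = G (c * a).
Proof.
rewrite mx_of_linE; last by move=> c' x y; rewrite Pl mulrDr -scalerAr Gl.
by case: (G_mul_congr c (GP (G a))).
Qed.

Lemma right_mult_congr a a' : G a = G a' -> right_mult_mx a = right_mult_mx a'.
Proof.
move=> e; apply: mx_ext => u; rewrite -[u]GP !right_mult_mxE.
by case: (G_mul_congr (P u) e).
Qed.

Lemma right_mult_lin : lin_map right_mult_mx.
Proof.
move=> a x y; apply: mx_ext => u; rewrite -[u]GP mulmxDr -scalemxAr.
by rewrite !right_mult_mxE mulrDr -scalerAr Gl.
Qed.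

Lemma right_mult_alg_morph : cont_alg_morph right_mult_mx.
Proof.
split; first exact: right_mult_lin.
- move=> x y; apply: mx_ext => u; rewrite MX_mulE mulmxA.
  by rewrite -[u]GP !right_mult_mxE mulrA.
- apply: mx_ext => u; rewrite -[u]GP right_mult_mxE mulr1.
  by change (G (P u) = G (P u) *m 1%:M); rewrite mulmx1.
- apply: continuous_into_mx => i j.
  have -> : (fun b => right_mult_mx b i j) = (fun b => G (P (delta_mx 0 i) * b) 0 j).
    by apply: funext => b; rewrite /right_mult_mx /mx_of_lin mxE.
  apply: (continuous_compose _ (@mxentry_continuous K _ _ 0 j)).
  apply: (continuous_compose _ Gc).
  have pair_cont : continuous (fun x : A => (P (delta_mx 0 i), x)).
    by apply: continuous_pair; [exact: cst_continuous|move=> x; exact: cvg_id].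
  exact: (continuous_compose pair_cont mulc).
Qed.

Lemma left_right_mult_commute b c :
  left_mult_mx c *m right_mult_mx b = right_mult_mx b *m left_mult_mx c.
Proof.
apply: mx_ext => u; rewrite !mulmxA -[u]GP.
by rewrite left_mult_mxE !right_mult_mxE left_mult_mxE mulrA.
Qed.

Lemma commutant_left_mult (M : 'M[K]_m.+1) :
  (forall c, left_mult_mx c *m M = M *m left_mult_mx c) ->
  M = right_mult_mx (P (G 1 *m M)).
Proof.
move=> Mc.
have unit_row a : G 1 *m left_mult_mx a = G a by rewrite left_mult_mxE mulr1.
apply: mx_ext => u; rewrite -[u]GP right_mult_mxE -unit_row -mulmxA Mc mulmxA.
by rewrite -{1}[G 1 *m M]GP left_mult_mxE.
Qed.
End RegularRepresentation.

Section FiniteDimensionalLifting.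
Variables (K : numFieldType) (g : topologicalLmodType K) (br : g -> g -> g).
Variables (V : topAlgType K) (nu : g -> V).
Hypothesis nuL : cont_lie_morph br nu.
Hypothesis V_fd_universal : forall (F : topAlgType K), fd_alg F ->
  forall f : g -> F, cont_lie_morph br f ->
    exists! f' : V -> F, cont_alg_morph f' /\ f = f' \o nu.

Lemma fd_morph_unique (F : topAlgType K) (h1 h2 : V -> F) : fd_alg F ->
  cont_alg_morph h1 -> cont_alg_morph h2 -> h1 \o nu = h2 \o nu -> h1 = h2.
Proof.
move=> fdF a1 a2 e.
have [f' [_ f'U]] := V_fd_universal fdF (comp_lie_alg_morph nuL a1).
by rewrite -(f'U h1) ?(f'U h2) //; split.
Qed.

(* A matrix commuting with h on the image of nu commutes with all of h(V):   *)
(* conjugating diag(h, h) by [[1, X], [0, 1]] gives another morphism, which  *)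
(* agrees with diag(h, h) on nu and whose upper right block is [X, h].       *)
Lemma commutant_lift N (h : V -> MX K N) (X : 'M[K]_N.+1) :
  cont_alg_morph h -> (forall x, X *m h (nu x) = h (nu x) *m X) ->
  forall v, X *m h v = h v *m X.
Proof.
move=> ha hX v.
pose U : 'M[K]_(N.+1 + N.+1) := block_mx 1%:M X 0 1%:M.
pose Ui : 'M[K]_(N.+1 + N.+1) := block_mx 1%:M (-X) 0 1%:M.
have UUi : U *m Ui = 1%:M.
  by rewrite mulmx_block !mul1mx !mul0mx !mulmx0 !mulmx1 !addr0 add0r addNr
    -scalar_mx_block.
have UiU : Ui *m U = 1%:M.
  by rewrite mulmx_block !mul1mx !mul0mx !mulmx0 !mulmx1 !addr0 add0r subrr
    -scalar_mx_block.
have conj_diag2 M : U *m diag2 M *m Ui = block_mx M (X *m M - M *m X) 0 M.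
  rewrite /U /diag2 /Ui !mulmx_block !mul1mx !mul0mx !mulmx0 !mulmx1.
  by rewrite !addr0 !add0r mulmxN mul0mx add0r addrC.
have dh := diag2_alg_morph ha.
have := fd_morph_unique (MX_fd K (N + N.+1)) dh (conj_alg_morph UUi UiU dh).
have agree_nu : forall x, diag2 (h (nu x)) = U *m diag2 (h (nu x)) *m Ui.
  by move=> x; rewrite conj_diag2 (hX x) subrr.
move=> /(_ (funext agree_nu)) /(congr1 (fun F => F v)) /= Ev.
have : diag2 (h v) = U *m diag2 (h v) *m Ui := Ev.
rewrite conj_diag2 /diag2 => blocks; have [_ Ecomm _ _] := eq_block_mx blocks.
by apply/eqP; rewrite -subr_eq0 -Ecomm.
Qed.

(* [d] lifts [f] modulo the kernel of [G]: it induces a continuous algebra  *)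
(* morphism V -> A/ker G extending f.                                        *)
Definition lift_mod (A : topAlgType K) (f : g -> A) n (G : A -> 'rV[K]_n)
    (d : V -> A) : Prop :=
  [/\ lin_map d,
      (forall v w, G (d (v * w)) = G (d v * d w)),
      G (d 1) = G 1,
      (forall x, G (d (nu x)) = G (f x)) &
      continuous (fun v => G (d v))].

Section QuotientLifting.
Variables (A : topAlgType K) (f : g -> A).
Hypothesis mulc : continuous (fun p : A * A => p.1 * p.2).
Hypothesis fL : cont_lie_morph br f.
Variables (m : nat) (G : A -> 'rV[K]_m.+1) (P : 'rV[K]_m.+1 -> A).
Hypothesis Gl : lin_map G.
Hypothesis Pl : lin_map P.
Hypothesis GP : forall u, G (P u) = u.
Hypothesis ker_ideal : forall a x, G a = 0 -> G (x * a) = 0 /\ G (a * x) = 0.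
Hypothesis Gc : continuous G.

Let rho := right_mult_mx G P.
Let rho_alg : cont_alg_morph rho := right_mult_alg_morph mulc Gl Pl GP ker_ideal Gc.

Lemma lift_mod_right_mult d : lift_mod f G d -> cont_alg_morph (rho \o d).
Proof.
have rho_congr a a' : G a = G a' -> rho a = rho a' :=
  right_mult_congr Gl Pl GP ker_ideal (a:=a) (a':=a').
move=> [d1 d2 d3 _ d5]; have [r1 r2 r3 _] := rho_alg; split => /=.
- by move=> a x y; rewrite d1 r1.
- by move=> x y; rewrite -r2; apply: rho_congr.
- by rewrite (rho_congr _ _ d3) r3.
- have -> : rho \o d = (rho \o P) \o (fun v => G (d v)).
    by apply: funext => w /=; apply: rho_congr; rewrite GP.
  apply: (continuous_compose d5); apply: lin_map_mx_continuous => a x y /=.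
  by rewrite Pl r1.
Qed.

(* Lift rho \o f to h : V -> MX m.  As the left multiplications commute     *)
(* with h on nu, they commute with all of h, so h v = rho (c v) for          *)
(* c v := P (G 1 *m h v); this c is the lift, unique modulo ker G.           *)
Lemma lift_mod_exists_unique : exists c : V -> A, lift_mod f G c /\
  forall d, lift_mod f G d -> forall v, G (d v) = G (c v).
Proof.
have rho_mul a b : G a *m rho b = G (a * b) := right_mult_mxE Gl Pl GP ker_ideal a b.
have [h [[ha hf] _]] := V_fd_universal (MX_fd K m) (comp_lie_alg_morph fL rho_alg).
have h_nu x : h (nu x) = rho (f x) by have := congr1 (fun F => F x) hf => /= ->.
pose c v := P (G 1 *m h v).
have h_rho v : h v = rho (c v).
  apply: (commutant_left_mult Gl Pl GP ker_ideal) => a.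
  apply: commutant_lift => // x; rewrite h_nu.
  exact: (left_right_mult_commute Gl Pl GP ker_ideal).
have Gc_row v : G (c v) = G 1 *m h v by rewrite GP.
have [h1 h2 h3 h4] := ha.
exists c; split.
- split.
  + by move=> a x y; rewrite /c h1 mulmxDr -scalemxAr Pl.
  + by move=> v w; rewrite Gc_row h2 MX_mulE mulmxA -Gc_row (h_rho w) rho_mul.
  + by rewrite Gc_row h3; change (G 1 *m 1%:M = G 1); rewrite mulmx1.
  + by move=> x; rewrite Gc_row h_nu rho_mul mul1r.
  + under eq_fun do rewrite Gc_row.
    apply: (continuous_compose h4); apply: lin_map_mx_continuous => a M1 M2.
    by rewrite mulmxDr -scalemxAr.
- move=> d dl v.
  have rho_d : rho \o d = h.
    apply: (fd_morph_unique (MX_fd K m) (lift_mod_right_mult dl) ha).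
    apply: funext => x /=; rewrite h_nu.
    by case: dl => _ _ _ d4 _; apply: (right_mult_congr Gl Pl GP ker_ideal).
  by rewrite Gc_row -rho_d /= rho_mul mul1r.
Qed.
End QuotientLifting.

Lemma lift_mod_exists_unique_any (A : topAlgType K) (f : g -> A)
    (mulc : continuous (fun p : A * A => p.1 * p.2)) (fL : cont_lie_morph br f)
    n (G : A -> 'rV[K]_n) (P : 'rV[K]_n -> A) :
  lin_map G -> lin_map P -> (forall u, G (P u) = u) ->
  (forall a x, G a = 0 -> G (x * a) = 0 /\ G (a * x) = 0) -> continuous G ->
  exists c : V -> A, lift_mod f G c /\
    forall d, lift_mod f G d -> forall v, G (d v) = G (c v).
Proof.
case: n G P => [|m] G P Gl Pl GP ker_ideal Gc; last first.
  exact: lift_mod_exists_unique.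
exists (fun _ => 0); split; last by move=> d _ v; rewrite !thinmx0.
split.
- by move=> a x y; rewrite scaler0 addr0.
- by move=> v w; rewrite !thinmx0.
- by rewrite !thinmx0.
- by move=> x; rewrite !thinmx0.
- exact: cst_continuous.
Qed.
End FiniteDimensionalLifting.

Section Coordinates.
Variables (K : numFieldType) (A : topAlgType K) (J : Type).
Variables (phi : A -> {ptws J -> K}) (psi : {ptws J -> K} -> A).
Hypothesis phil : forall (a : K) (x y : A) (j : J),
  phi (a *: x + y) j = a * phi x j + phi y j.
Hypothesis phiK : cancel phi psi.
Hypothesis psiK : cancel psi phi.
Hypothesis phic : continuous phi.
Hypothesis psic : continuous psi.
Hypothesis mulc : continuous (fun p : A * A => p.1 * p.2).

Lemma phi0 j : phi 0 j = 0.
Proof.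
have := phil 1 0 0 j; rewrite scale1r addr0 mul1r.
by move/(congr1 (fun t => t - phi 0 j)); rewrite addrK subrr => ->.
Qed.

Lemma phiZ a x j : phi (a *: x) j = a * phi x j.
Proof. by rewrite -[a *: x]addr0 phil phi0 addr0. Qed.

Lemma phiD x y j : phi (x + y) j = phi x j + phi y j.
Proof. by have := phil 1 x y j; rewrite scale1r mul1r. Qed.

Lemma phiB x y j : phi (x - y) j = phi x j - phi y j.
Proof. by rewrite phiD -[- y]scaleN1r phiZ mulN1r. Qed.

Lemma phi_sum (I : Type) (r : seq I) (F : I -> A) j :
  phi (\sum_(i <- r) F i) j = \sum_(i <- r) phi (F i) j.
Proof.
elim: r => [|i r IH]; first by rewrite !big_nil phi0.
by rewrite !big_cons phiD IH.
Qed.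

Lemma phi_inj x y : (forall j, phi x j = phi y j) -> x = y.
Proof. by move=> H; rewrite -(phiK x) -(phiK y); congr psi; apply: funext. Qed.

Lemma scale_continuous (x : A) : continuous (fun t : K => t *: x).
Proof.
have -> : (fun t : K => t *: x) =
    psi \o (fun t => (fun k => t * phi x k) : {ptws J -> K}).
  by apply: funext => t /=; apply: phi_inj => j; rewrite psiK phiZ.
apply: (continuous_compose _ psic); apply: continuous_into_ptws => k.
by apply: continuous_mul; [move=> t; exact: cvg_id|exact: cst_continuous].
Qed.

(* Continuity of (x, z, y) |-> phi (x * z * y) j at 0: small products.     *)
Lemma small_triple_products j : exists (W1 W3 : set A) (L : seq (J * K)),
  [/\ nbhs 0 W1, nbhs 0 W3, (forall p, List.In p L -> 0 < p.2) &
      forall x z y, W1 x -> (forall p, List.In p L -> `|phi z p.1| < p.2) ->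
        W3 y -> `|phi (x * z * y) j| < 1].
Proof.
pose T3 := fun p : (A * A) * A => phi (p.1.1 * p.1.2 * p.2) j.
have T3c : continuous T3.
  have c1 : continuous (fun p : (A * A) * A => (p.1.1 * p.1.2, p.2)).
    apply: continuous_pair; last exact: continuous_snd.
    exact: (continuous_compose (@continuous_fst _ _) mulc).
  exact: (continuous_compose (continuous_compose (continuous_compose c1 mulc) phic)
    (@ptws_eval_continuous K J j)).
have T30 : T3 ((0, 0), 0) = 0 by rewrite /T3 /= !mul0r phi0.
have := T3c ((0, 0), 0) (ball (T3 ((0, 0), 0)) 1) (nbhsx_ballx _ _ ltr01).
rewrite T30 => -[[W12 W3] /= [nW12 nW3] sW].
move: nW12 => [[W1 W2] /= [nW1 nW2] sW12].
have nW2' : nbhs (0 : {ptws J -> K}) (psi @^-1` W2).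
  have e0 : psi 0 = 0 by apply: phi_inj => k; rewrite psiK phi0.
  by apply: psic; rewrite e0.
have [L [Lp LW]] := ptws_nbhs0_box nW2'.
exists W1, W3, L; split => // x z y xW zL yW.
have /= := sW ((x, z), y) (conj (sW12 (x, z) (conj xW _)) yW).
  by rewrite /ball /= sub0r normrN; apply; rewrite -(phiK z); apply: LW.
Qed.

(* Each coordinate of the two-sided ideal generated by z depends only on   *)
(* finitely many coordinates of z (by continuity and a scaling argument).   *)
Lemma coordinate_finite_support j : exists F : seq J, forall z,
  (forall k, List.In k F -> phi z k = 0) -> forall x y, phi (x * z * y) j = 0.
Proof.
have [W1 [W3 [L [nW1 nW3 Lp small]]]] := small_triple_products j.
exists (map fst L) => z zF x y.
have zbox s p : List.In p L -> `|phi (s *: z) p.1| < p.2.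
  by move=> Hp; rewrite phiZ zF ?mulr0 ?normr0; [exact: Lp|exact: List.in_map].
have : \forall t \near (0 : K), W1 (t *: x) /\ W3 (t *: y).
  have W1x : nbhs ((0 : K) *: x) W1 by rewrite scale0r.
  have W3y : nbhs ((0 : K) *: y) W3 by rewrite scale0r.
  by apply: filterI; [exact: (scale_continuous W1x)|exact: (scale_continuous W3y)].
move=> /nbhs_dnbhs Ht.
have [t [[Wx Wy] t0]] := filter_ex (filterI Ht (nbhs_dnbhs_neq (0 : K))).
apply/eqP; apply/negPn/negP => c0.
set c := phi (x * z * y) j in c0.
set s := (t ^+ 2 * c)^-1.
have := small _ _ _ Wx (zbox s) Wy.
have -> : t *: x * (s *: z) * (t *: y) = (t * s * t) *: (x * z * y).
  rewrite -!scalerAl -!scalerAr -?scalerAl -?scalerAr -?scalerAl !scalerA.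
  by congr (_ *: _); rewrite /GRing.scale /=; ring.
rewrite phiZ -/c.
have -> : t * s * t * c = 1.
  have -> : t * s * t * c = (t ^+ 2 * c) * s by rewrite expr2; ring.
  by rewrite /s mulfV // mulf_neq0 // expf_neq0.
by rewrite normr1 ltxx.
Qed.
End Coordinates.

(* For a finite list S of coordinates, I_S is the set of a whose two-sided *)
(* ideal has vanishing S-coordinates; it is the largest two-sided ideal    *)
(* with vanishing S-coordinates.                                           *)
Definition coord_ideal (K : numFieldType) (A : topAlgType K) (J : Type)
    (phi : A -> {ptws J -> K}) (S : seq {classic J}) (a : A) : Prop :=
  forall k, k \in S -> forall x y, phi (x * a * y) k = 0.

Lemma In_mem (T : eqType) (x : T) (s : seq T) : List.In x s <-> x \in s.
Proof.
elim: s => [|y s IH] //=; rewrite in_cons; split.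
  by case=> [->|/IH ->]; rewrite ?eqxx ?orbT.
by case/orP => [/eqP ->|/IH]; [left|right].
Qed.

Section FiniteCodimension.
Variables (K : numFieldType) (A : topAlgType K) (J : Type).
Variables (phi : A -> {ptws J -> K}) (psi : {ptws J -> K} -> A).
Hypothesis phil : forall (a : K) (x y : A) (j : J),
  phi (a *: x + y) j = a * phi x j + phi y j.
Hypothesis phiK : cancel phi psi.
Hypothesis psiK : cancel psi phi.
Hypothesis phic : continuous phi.

Local Notation C := {classic J}.
Local Notation phiZ := (phiZ phil).
Local Notation phiD := (phiD phil).
Local Notation phiB := (phiB phil).
Local Notation phi_sum := (phi_sum phil).
Local Notation phi_inj := (phi_inj phiK).

Variables (S FS : seq C) (j0 : C).
Hypothesis FSu : uniq FS.
Hypothesis FS_controls : forall z, (forall l, l \in FS -> phi z l = 0) ->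
  coord_ideal phi S z.

Let nF := size FS.

Definition restrict_FS (a : A) : 'rV[K]_nF := \row_i phi a (nth j0 FS i).
Definition extend_FS (v : 'rV[K]_nF) : A :=
  psi (fun k : J => \sum_(i < nF) (if nth j0 FS i == (k : C) then v 0 i else 0)).

Lemma phi_extend_FS v (k : C) :
  phi (extend_FS v) k = \sum_(i < nF) (if nth j0 FS i == k then v 0 i else 0).
Proof. by rewrite /extend_FS psiK. Qed.

Lemma restrict_extend_FS v : restrict_FS (extend_FS v) = v.
Proof.
apply/rowP => i; rewrite mxE phi_extend_FS (bigD1 i) //= eqxx big1 ?addr0 //.
move=> i' ne; case: ifP => // /eqP e; exfalso; move/eqP: ne; apply.
apply: val_inj; apply/eqP.
by rewrite -(nth_uniq j0 (ltn_ord i') (ltn_ord i) FSu) e.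
Qed.

Lemma extend_FS_lin : lin_map extend_FS.
Proof.
move=> a x y; apply: phi_inj => k; rewrite phil !phi_extend_FS big_distrr.
rewrite -big_split /=; apply: eq_bigr => i _; rewrite !mxE.
by case: ifP => _; rewrite ?mulr0 ?addr0.
Qed.

Lemma restrict_FS_lin : lin_map restrict_FS.
Proof. by move=> a x y; apply/rowP => i; rewrite !mxE phil. Qed.

Lemma restrict_FS_continuous : continuous restrict_FS.
Proof.
apply: continuous_into_mx => i j.
under eq_fun do rewrite mxE.
exact: (continuous_compose phic (@ptws_eval_continuous K J _)).
Qed.

Lemma truncation_FS a l : l \in FS -> phi (a - extend_FS (restrict_FS a)) l = 0.
Proof.
move=> lF; rewrite phiB phi_extend_FS.
have li : (index l FS < nF)%N by rewrite index_mem.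
rewrite (bigD1 (Ordinal li)) //= nth_index // eqxx mxE nth_index // big1.
  by rewrite addr0 subrr.
move=> i' ne; case: ifP => // /eqP e; exfalso; move/eqP: ne; apply.
by apply: val_inj => /=; rewrite -e index_uniq.
Qed.

Let e_FS (i : 'I_nF) : 'rV[K]_nF := delta_mx 0 i.

Lemma extend_FS_basis (v : 'rV[K]_nF) :
  extend_FS v = \sum_(i < nF) v 0 i *: extend_FS (e_FS i).
Proof.
apply: phi_inj => k; rewrite phi_sum phi_extend_FS.
apply: eq_bigr => i _; rewrite phiZ phi_extend_FS.
rewrite (bigD1 i) //= big1 ?addr0; last first.
  by move=> i' ne; rewrite /e_FS mxE /= eq_sym (negbTE ne) /=; case: ifP.
by rewrite /e_FS mxE !eqxx /=; case: ifP => _; rewrite ?mulr1 ?mulr0.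
Qed.

(* The S-coordinates of the products e_p * a * e_q of a with basis elements *)
(* supported on FS: a linear map to a finite-dimensional space whose kernel *)
(* is exactly I_S.                                                           *)
Let X := ('I_(size S) * 'I_nF * 'I_nF)%type.
Let ev (i : 'I_#|{: X}|) : X := enum_val i.
Definition sandwich_coords (a : A) : 'rV[K]_#|{: X}| :=
  \row_i phi (extend_FS (e_FS (ev i).1.2) * a * extend_FS (e_FS (ev i).2))
    (nth j0 S (ev i).1.1).

Lemma sandwich_coords_lin : lin_map sandwich_coords.
Proof.
move=> a x y; apply/rowP => i.
by rewrite !mxE mulrDr mulrDl -scalerAr -scalerAl phil.
Qed.

Lemma sandwich_coords_ker a : sandwich_coords a = 0 <-> coord_ideal phi S a.
Proof.
split; last first.
  by move=> Ha; apply/rowP => i; rewrite !mxE; apply: Ha; exact: mem_nth.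
move=> Hs k kS x y.
pose x0 := extend_FS (restrict_FS x); pose y0 := extend_FS (restrict_FS y).
have reduce : phi (x * a * y) k = phi (x0 * a * y0) k.
  have -> : x * a * y =
      1 * (x - x0) * (a * y) + (x0 * a) * (y - y0) * 1 + x0 * a * y0.
    by rewrite mul1r mulr1 mulrBl mulrBr !mulrA addrA subrK subrK.
  have vx l : l \in FS -> phi (x - x0) l = 0 by exact: truncation_FS.
  have vy l : l \in FS -> phi (y - y0) l = 0 by exact: truncation_FS.
  by rewrite !phiD (FS_controls vx kS) (FS_controls vy kS) !add0r.
rewrite reduce /x0 /y0 extend_FS_basis mulr_suml mulr_suml phi_sum big1 // => p _.
rewrite [extend_FS (restrict_FS y)]extend_FS_basis mulr_sumr phi_sum big1 // => q _.
rewrite -scalerAl -scalerAl -scalerAr !phiZ.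
have ki : (index k S < size S)%N by rewrite index_mem.
have := congr1 (fun M : 'rV[K]_#|{: X}| => M 0 (enum_rank (((Ordinal ki, p), q) : X))) Hs.
by rewrite !mxE /ev enum_rankK /= nth_index // => ->; rewrite !mulr0.
Qed.

Lemma presentation_of_support : exists n (G : A -> 'rV[K]_n) (P : 'rV[K]_n -> A),
  [/\ lin_map G, lin_map P, (forall u, G (P u) = u),
      (forall a, G a = 0 <-> coord_ideal phi S a) & continuous G].
Proof.
pose H := mx_of_lin (fun v => sandwich_coords (extend_FS v)).
have sandwichE a : sandwich_coords a = restrict_FS a *m H.
  rewrite mx_of_linE; last first.
    by move=> c u w; rewrite extend_FS_lin sandwich_coords_lin.
  apply/eqP; rewrite -subr_eq0 -(lin_mapB sandwich_coords_lin); apply/eqP.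
  by apply/sandwich_coords_ker; apply: FS_controls => l; exact: truncation_FS.
have [B HB] := row_fullP (col_base_full H).
exists (\rank H), (fun a => restrict_FS a *m col_base H),
  (fun u => extend_FS (u *m B)); split.
- by move=> c x y; rewrite restrict_FS_lin mulmxDl scalemxAl.
- by move=> c x y; rewrite mulmxDl -scalemxAl extend_FS_lin.
- by move=> u; rewrite restrict_extend_FS -mulmxA HB mulmx1.
- move=> a; have base_split : sandwich_coords a =
      (restrict_FS a *m col_base H) *m row_base H.
    by rewrite sandwichE -mulmxA mulmx_base.
  rewrite -sandwich_coords_ker base_split; split; first by move=> ->; rewrite mul0mx.
  by move=> /eqP; rewrite mulmx_free_eq0 ?row_base_free // => /eqP.
- have base_cont : continuous (fun u : 'rV[K]_nF => u *m col_base H).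
    by apply: lin_map_mx_continuous => c x y; rewrite mulmxDl scalemxAl.
  exact: (continuous_compose restrict_FS_continuous base_cont).
Qed.
End FiniteCodimension.

(* Gluing: f : g -> A, A weakly complete, is lifted modulo each I_S; for   *)
(* S = [:: j] these lifts have coherent j-th coordinates, which assemble    *)
(* into the required morphism V -> A.                                      *)
Section Gluing.
Variables (K : numFieldType) (g : topologicalLmodType K) (br : g -> g -> g).
Variables (V : topAlgType K) (nu : g -> V).
Hypothesis nuL : cont_lie_morph br nu.
Hypothesis V_fd_universal : forall (F : topAlgType K), fd_alg F ->
  forall f : g -> F, cont_lie_morph br f ->
    exists! f' : V -> F, cont_alg_morph f' /\ f = f' \o nu.
Variables (A : topAlgType K) (J : Type).
Variables (phi : A -> {ptws J -> K}) (psi : {ptws J -> K} -> A).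
Hypothesis phil : forall (a : K) (x y : A) (j : J),
  phi (a *: x + y) j = a * phi x j + phi y j.
Hypothesis phiK : cancel phi psi.
Hypothesis psiK : cancel psi phi.
Hypothesis phic : continuous phi.
Hypothesis psic : continuous psi.
Hypothesis mulc : continuous (fun p : A * A => p.1 * p.2).
Variable f : g -> A.
Hypothesis fL : cont_lie_morph br f.

Local Notation C := {classic J}.
Local Notation phiB := (phiB phil).
Local Notation phi_inj := (phi_inj phiK).

Lemma finite_control (S : seq C) : exists FS : seq C, uniq FS /\
  forall z, (forall l, l \in FS -> phi z l = 0) -> coord_ideal phi S z.
Proof.
suff [FS FSP] : exists FS : seq C,
    forall z, (forall l, l \in FS -> phi z l = 0) -> coord_ideal phi S z.
  exists (undup FS); split; first exact: undup_uniq.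
  by move=> z Hz; apply: FSP => l lF; apply: Hz; rewrite mem_undup.
elim: S => [|j S [FS FSP]]; first by exists [::].
have [F FP] := coordinate_finite_support phil phiK psiK phic psic mulc j.
exists ((F : seq C) ++ FS) => z Hz k; rewrite inE => /orP[/eqP -> x y|kS].
  by apply: FP => l /(@In_mem C) lF; apply: Hz; rewrite mem_cat lF.
by apply: FSP => // l lFS; apply: Hz; rewrite mem_cat lFS orbT.
Qed.

(* A lift of f modulo I_S, together with a presentation of A/I_S. *)
Record quotient_lift := QuotientLift {
  ql_dim : nat;
  ql_G : A -> 'rV[K]_ql_dim;
  ql_P : 'rV[K]_ql_dim -> A;
  ql_map : V -> A }.
Arguments ql_G : clear implicits.
Arguments ql_P : clear implicits.

Definition lifts_mod (S : seq C) (D : quotient_lift) : Prop :=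
  [/\ lin_map (ql_G D), lin_map (ql_P D), (forall u, ql_G D (ql_P D u) = u),
      (forall a, ql_G D a = 0 <-> coord_ideal phi S a) &
      [/\ continuous (ql_G D), lift_mod nu f (ql_G D) (ql_map D) &
          forall d, lift_mod nu f (ql_G D) d ->
            forall v, ql_G D (d v) = ql_G D (ql_map D v)]].

Lemma quotient_lift_exists (S : seq C) (j0 : C) : exists D, lifts_mod S D.
Proof.
have [FS [FSu FSc]] := finite_control S.
have [n [G [P [Gl Pl GP Gker Gc]]]] :=
  presentation_of_support phil phiK psiK phic j0 FSu FSc.
have ker_ideal a x : G a = 0 -> G (x * a) = 0 /\ G (a * x) = 0.
  move=> /Gker Ha; split; apply/Gker => k kS x' y'.
    by rewrite mulrA Ha.
  by rewrite !mulrA -(mulrA _ x) Ha.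
have [c [cl cU]] :=
  lift_mod_exists_unique_any nuL V_fd_universal mulc fL Gl Pl GP ker_ideal Gc.
by exists (QuotientLift G P c); split.
Qed.

Section LiftsModIdeal.
Variables (S : seq C) (D : quotient_lift).
Hypothesis okD : lifts_mod S D.
Local Notation G := (ql_G D).

Lemma congr_sandwich a a' : G a = G a' ->
  forall k, k \in S -> forall x y, phi (x * a * y) k = phi (x * a' * y) k.
Proof.
have [Gl _ _ Gker _] := okD; move=> e k kS x y.
have : G (a - a') = 0 by rewrite (lin_mapB Gl) e subrr.
move/Gker/(_ k kS x y); rewrite mulrBr mulrBl phiB.
by move/eqP; rewrite subr_eq0 => /eqP.
Qed.

Lemma congr_coord k : k \in S -> forall a a', G a = G a' -> phi a k = phi a' k.
Proof.
by move=> kS a a' e; have := congr_sandwich e kS 1 1; rewrite !mul1r !mulr1.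
Qed.

Lemma congr_mul a a' x : G a = G a' -> G (x * a) = G (x * a') /\ G (a * x) = G (a' * x).
Proof.
have [Gl _ _ Gker _] := okD; move=> e.
split; apply/eqP; rewrite -subr_eq0 -(lin_mapB Gl); apply/eqP;
  apply/Gker => k kS x' y'; rewrite mulrBr mulrBl phiB.
  by rewrite !mulrA (congr_sandwich e kS) subrr.
by rewrite -!mulrA !(mulrA _ _ (x * y')) (congr_sandwich e kS) subrr.
Qed.

Lemma congr_coord_continuous (d : V -> A) k : k \in S ->
  continuous (fun v => G (d v)) -> continuous (fun v => phi (d v) k).
Proof.
have [_ Pl GP _ _] := okD; move=> kS dc.
have -> : (fun v => phi (d v) k) = (fun v => phi (ql_P D (G (d v))) k).
  by apply: funext => v; apply: congr_coord => //; rewrite GP.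
have lc : continuous (fun u : 'rV[K]_(ql_dim D) => (phi (ql_P D u) k : K^o)).
  by apply: lin_map_mx_scalar_continuous => a x y; rewrite Pl phil.
exact: (continuous_compose dc lc).
Qed.
End LiftsModIdeal.

Lemma lifts_mod_transfer S1 S2 D1 D2 : lifts_mod S1 D1 -> lifts_mod S2 D2 ->
  {subset S1 <= S2} -> forall v, ql_G D1 (ql_map D2 v) = ql_G D1 (ql_map D1 v).
Proof.
move=> ok1 ok2 sub.
have fac a a' : ql_G D2 a = ql_G D2 a' -> ql_G D1 a = ql_G D1 a'.
  have [G1l _ _ G1ker _] := ok1; move=> e.
  apply/eqP; rewrite -subr_eq0 -(lin_mapB G1l); apply/eqP.
  apply/G1ker => k kS x y.
  by rewrite mulrBr mulrBl phiB (congr_sandwich ok2 e (sub _ kS)) subrr.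
have [G1l _ _ _ [_ _ U1]] := ok1.
have [_ P2l G2P _ [_ [c1 c2 c3 c4 c5] _]] := ok2.
apply: U1; split => //.
- by move=> v w; apply: fac; apply: c2.
- exact: fac.
- by move=> x; apply: fac.
- have -> : (fun v => ql_G D1 (ql_map D2 v)) =
      (fun v => ql_G D1 (ql_P D2 (ql_G D2 (ql_map D2 v)))).
    by apply: funext => v; apply: fac; rewrite G2P.
  have lc : continuous (fun u : 'rV[K]_(ql_dim D2) => ql_G D1 (ql_P D2 u)).
    by apply: lin_map_mx_continuous => a x y; rewrite P2l G1l.
  exact: (continuous_compose c5 lc).
Qed.

Definition local_lift (j : J) : quotient_lift :=
  projT1 (cid (quotient_lift_exists [:: (j : C)] j)).

Lemma local_liftP j : lifts_mod [:: (j : C)] (local_lift j).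
Proof. exact: (projT2 (cid (quotient_lift_exists [:: (j : C)] j))). Qed.

Definition glued_lift (v : V) : A := psi (fun j => phi (ql_map (local_lift j) v) j).

Lemma phi_glued_lift v j : phi (glued_lift v) j = phi (ql_map (local_lift j) v) j.
Proof. by rewrite /glued_lift psiK. Qed.

Lemma mem_self (j : J) : (j : C) \in [:: (j : C)].
Proof. by rewrite inE eqxx. Qed.

(* Coherence: the glued map is itself a lift modulo each I_[:: j].  Compare *)
(* both with a lift modulo I_(j :: F), where F controls coordinate j.       *)
Lemma glued_lift_local j v :
  ql_G (local_lift j) (glued_lift v) = ql_G (local_lift j) (ql_map (local_lift j) v).
Proof.
have [F FP] := coordinate_finite_support phil phiK psiK phic psic mulc j.
have [D' ok'] := quotient_lift_exists ((j : C) :: (F : seq C)) j.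
have sub_j : {subset [:: (j : C)] <= (j : C) :: (F : seq C)}.
  by move=> k; rewrite inE => /eqP ->; rewrite inE eqxx.
have agree_F k : List.In k F -> phi (glued_lift v - ql_map D' v) k = 0.
  move=> kF; rewrite phiB phi_glued_lift.
  have sub_k : {subset [:: (k : C)] <= (j : C) :: (F : seq C)}.
    move=> l; rewrite inE => /eqP ->; rewrite inE; apply/orP; right.
    exact/(@In_mem C).
  have := lifts_mod_transfer (local_liftP k) ok' sub_k v.
  by move/(congr_coord (local_liftP k) (mem_self k)) => ->; rewrite subrr.
have [Gl _ _ Gker _] := local_liftP j.
have : ql_G (local_lift j) (glued_lift v - ql_map D' v) = 0.
  by apply/Gker => k; rewrite inE => /eqP -> x y; exact: FP.
rewrite (lin_mapB Gl) => /eqP; rewrite subr_eq0 => /eqP ->.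
exact: (lifts_mod_transfer (local_liftP j) ok' sub_j v).
Qed.

Lemma glued_lift_alg_morph : cont_alg_morph glued_lift.
Proof.
have fac j := congr_coord (local_liftP j) (mem_self j).
split.
- move=> a x y; apply: phi_inj => j.
  have [_ _ _ _ [_ [c1 _ _ _ _] _]] := local_liftP j.
  by rewrite phil !phi_glued_lift c1 phil.
- move=> x y; apply: phi_inj => j; rewrite phi_glued_lift; apply: fac.
  have [_ _ _ _ [_ [_ c2 _ _ _] _]] := local_liftP j.
  have [_ e1] := congr_mul (local_liftP j) (glued_lift y) (glued_lift_local j x).
  have [e2 _] :=
    congr_mul (local_liftP j) (ql_map (local_lift j) x) (glued_lift_local j y).
  by rewrite c2 e1 e2.
- apply: phi_inj => j; rewrite phi_glued_lift; apply: fac.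
  by have [_ _ _ _ [_ [_ _ c3 _ _] _]] := local_liftP j.
- apply: (continuous_compose _ psic); apply: continuous_into_ptws => j.
  have [_ _ _ _ [_ [_ _ _ _ c5] _]] := local_liftP j.
  exact: (congr_coord_continuous (local_liftP j) (mem_self j) c5).
Qed.

Lemma glued_lift_extends : f = glued_lift \o nu.
Proof.
apply: funext => x /=; apply: phi_inj => j; rewrite phi_glued_lift.
apply: (congr_coord (local_liftP j) (mem_self j)).
by have [_ _ _ _ [_ [_ _ _ c4 _] _]] := local_liftP j; rewrite c4.
Qed.

Lemma glued_lift_unique (h : V -> A) :
  cont_alg_morph h -> f = h \o nu -> h = glued_lift.
Proof.
move=> [h1 h2 h3 h4] hf; apply: funext => v; apply: phi_inj => j.
rewrite phi_glued_lift; apply: (congr_coord (local_liftP j) (mem_self j)).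
have [Gl _ _ _ [Gc _ U]] := local_liftP j; apply: U; split => //.
- by move=> w1 w2; rewrite h2.
- by rewrite h3.
- by move=> x; rewrite hf.
- exact: (continuous_compose h4 Gc).
Qed.
End Gluing.

Definition wc_universal (K : numFieldType) (g : topologicalLmodType K)
    (br : g -> g -> g) (V : topAlgType K) (nu : g -> V) : Prop :=
  forall (A : topAlgType K), wc_alg A -> forall f : g -> A, cont_lie_morph br f ->
    exists! f' : V -> A, cont_alg_morph f' /\ f = f' \o nu.

Theorem fd_universal_wc_universal (K : numFieldType) (g : topologicalLmodType K)
    (br : g -> g -> g) (V : topAlgType K) (nu : g -> V) :
  cont_lie_morph br nu ->
  (forall (F : topAlgType K), fd_alg F -> forall f : g -> F, cont_lie_morph br f ->
     exists! f' : V -> F, cont_alg_morph f' /\ f = f' \o nu) ->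
  wc_universal br nu.
Proof.
move=> nuL Vfd A [[J [phi [psi [phil phiK psiK phic psic]]]] mulc] f fL.
exists (glued_lift nuL Vfd phil phiK psiK phic psic mulc fL); split.
  split; [exact: glued_lift_alg_morph|exact: glued_lift_extends].
by move=> h [ha hf]; apply/esym; exact: glued_lift_unique ha hf.
Qed.

Lemma wc_universal_iso (K : numFieldType) (g : topologicalLmodType K)
    (br : g -> g -> g) (V U : topAlgType K) (nu : g -> V) (lam : g -> U) :
  wc_alg V -> wc_alg U -> cont_lie_morph br nu -> cont_lie_morph br lam ->
  wc_universal br nu -> wc_universal br lam ->
  exists (phi : V -> U) (psi : U -> V),
    [/\ cont_alg_morph phi, cont_alg_morph psi,
        cancel phi psi, cancel psi phi & phi \o nu = lam].
Proof.
move=> wcV wcU nuL lamL Vu Uu.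
have [phi [[phi_alg phi_nu] _]] := Vu U wcU lam lamL.
have [psi [[psi_alg psi_lam] _]] := Uu V wcV nu nuL.
have [idV [_ V_endo]] := Vu V wcV nu nuL.
have [idU [_ U_endo]] := Uu U wcU lam lamL.
have psi_phi : psi \o phi = id.
  rewrite -(V_endo (psi \o phi)); last first.
    by split; [exact: comp_alg_morph|rewrite -compA -phi_nu].
  by apply: V_endo; split; [exact: id_alg_morph|].
have phi_psi : phi \o psi = id.
  rewrite -(U_endo (phi \o psi)); last first.
    by split; [exact: comp_alg_morph|rewrite -compA -psi_lam].
  by apply: U_endo; split; [exact: id_alg_morph|].
exists phi, psi; split => //.
- by move=> x; have := congr1 (fun F => F x) psi_phi.
- by move=> x; have := congr1 (fun F => F x) phi_psi.
Qed.

Theorem proposition1p9 (R : realType) (b : bool) :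
  let K : numFieldType := if b then (R : numFieldType) else (R[i] : numFieldType) in
  forall (g : topologicalLmodType K) (br : g -> g -> g),
  is_top_lie br -> profinite_dim br ->
  forall (V : topAlgType K) (nu : g -> V),
  wc_alg V -> cont_lie_morph br nu ->
  (forall (F : topAlgType K), fd_alg F ->
     forall f : g -> F, cont_lie_morph br f ->
       exists! f' : V -> F, cont_alg_morph f' /\ f = f' \o nu) ->
  (forall (A : topAlgType K), wc_alg A ->
     forall f : g -> A, cont_lie_morph br f ->
       exists! f' : V -> A, cont_alg_morph f' /\ f = f' \o nu) /\
  (forall (U : topAlgType K) (lam : g -> U), is_wc_envelope br U lam ->
     exists (phi : V -> U) (psi : U -> V),
       [/\ cont_alg_morph phi, cont_alg_morph psi,
           cancel phi psi, cancel psi phi & phi \o nu = lam]).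
Proof.
move=> K g br _ _ V nu wcV nuL V_fd_universal.
have V_universal := fd_universal_wc_universal nuL V_fd_universal.
split=> // U lam [wcU lamL U_universal].
exact: wc_universal_iso wcV wcU nuL lamL V_universal U_universal.
Qed.
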